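(* Let $u,v$ be positive integers with $uv\equiv 0\pmod{12}$ and $v\equiv 0\pmod 6$. Then $\Phi(u\times v,4,2)\le\left\lfloor\frac{u}{4}\left(\left\lfloor\frac{uv-1}{3}\left\lfloor\frac{uv-2}{2}\right\rfloor\right\rfloor-2\right)\right\rfloor$.
   Context: A 2-D $(u\times v,4,2)$-OOC is a family $\mathcal C$ of $u\times v$ $(0,1)$-matrices of Hamming weight $4$ such that for all $A=(a_{ij}),B=(b_{ij})\in\mathcal C$ and integers $r$ with $A\ne B$ or $r\not\equiv0\pmod v$, $\sum_{i,j}a_{ij}b_{i,j+r}\le 2$ (column indices mod $v$). $\Phi(u\times v,4,2)$ is the largest size of such a code. *)

From mathcomp Require Import all_boot.
Set Implicit Arguments. Unset Strict Implicit. Unset Printing Implicit Defensive.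

Definition bmat (u v : nat) := {ffun 'I_u * 'I_v -> bool}.

Definition hweight u v (A : bmat u v) : nat := #|[set p | A p]|.

(* Cyclic cross-correlation  sum_{i,j} a_{ij} b_{i, j+r mod v}  (for 0/1
   entries this is the number of (i,j) with a_{ij} = b_{i,(j+r) mod v} = 1). *)
Definition ccorr u v (A B : bmat u v) (r : nat) : nat :=
  #|[set p : 'I_u * 'I_v * 'I_v |
      [&& A (p.1.1, p.1.2), B (p.1.1, p.2) & (p.2 == (p.1.2 + r) %% v :> nat)]]|.

(* C is a 2-D (u x v, 4, 2)-OOC.  Shifts r range over integers mod v,
   represented by r in {0,..,v-1}. *)
Definition is_OOC_4_2 u v (C : {set bmat u v}) : Prop :=
  (forall A, A \in C -> hweight A = 4) /\
  (forall A B, A \in C -> B \in C -> forall r : 'I_v,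
     (A != B) || (r != 0 :> nat) -> ccorr A B r <= 2).

From mathcomp Require Import all_boot all_algebra zify.
Set Implicit Arguments. Unset Strict Implicit. Unset Printing Implicit Defensive.
Import GRing.Theory.

(* A codeword A of a (u x v, 4, 2)-OOC C together with a cyclic column shift r gives
   a block: the 4 cells of the grid 'I_u x Z_v occupied by A shifted by r.  The
   correlation condition says exactly that two distinct blocks share at most 2 cells,
   so the N = uv cells carry a packing of 4-sets in which every triple of cells lies
   in at most one block.

   1. Section TriplePacking, for any such packing: if nuncov x y counts the third
      points z such that {x, y, z} lies in no block, then
      2 codeg x y + nuncov x y = N - 2, hence 6 deg x + sum_(y <> x) nuncov x y =
      (N - 1)(N - 2), and every nuncov x y is even when N is.
   2. Section CodeBlocks: column shifts permute the blocks, so nuncov is shift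
      invariant.  Along a row, with g of order 6 in Z_v, the triple {0, 2g, 4g} is
      uncovered (a block through it would equal its own 2g-shift), and when 4 | N a
      parity argument (the involution b -> b + 3g) puts {0, 3g} in an uncovered
      triple.  A case analysis yields five points y with nuncov (i,0) y > 0, so the
      sum of the nuncov's is at least 10 and deg (i,0) <= ((N-1)(N-2) - 10)/6.
   3. Summing deg (i,0) over the u rows counts every codeword 4 times. *)

Lemma card_in_sum (T : finType) (A : {set T}) (f : pred T) :
  #|[set w in A | f w]| = \sum_(w in A) (f w : nat).
Proof.
rewrite -sum1_card big_mkcond [RHS]big_mkcond; apply: eq_bigr => w _.
by rewrite !inE; case: (w \in A); case: (f w).
Qed.

Lemma uniq_card_leq (T : finType) (A : {set T}) (s : seq T) :
  uniq s -> all [in A] s -> size s <= #|A|.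
Proof.
move=> us /allP sA; rewrite cardE uniq_leq_size // => y ys.
by rewrite mem_enum; apply: sA.
Qed.

Lemma involution_card_even (T : finType) (f : T -> T) (S : {set T}) :
  involutive f -> (forall x, f x != x) -> {in S, forall x, f x \in S} ->
  ~~ odd #|S|.
Proof.
move=> fK fx; elim: {S}_.+1 {-2}S (ltnSn #|S|) => // k IH S ltSk fS.
have [->|[a aS]] := set_0Vmem S; first by rewrite cards0.
have faS : f a \in S :\ a by rewrite !inE fx fS.
have cardS : #|S| = (#|S :\ a :\ f a|).+2.
  by rewrite (cardsD1 a) aS (cardsD1 (f a)) faS.
rewrite cardS /= negbK; apply: IH => [|x]; first by move: ltSk; rewrite cardS; lia.
rewrite !inE => /and3P[xfa xa xS]; rewrite fS // andbT.
rewrite (inj_eq (can_inj fK)) xa /=.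
by apply: contra xfa => /eqP <-; rewrite fK.
Qed.

Lemma deg_bound_arith N D S : N %% 12 = 0 -> 0 < N ->
  6 * D + S = (N - 1) * (N - 2) -> 10 <= S ->
  D <= ((N - 1) * ((N - 2) %/ 2)) %/ 3 - 2.
Proof.
move=> N12 N_gt0 count S10.
have [k Nk] : exists k, N = 12 * k.+1 by exists (N %/ 12).-1; lia.
subst N.
have -> : (12 * k.+1 - 2) %/ 2 = 6 * k.+1 - 1 by lia.
pose y := 24 * k.+1 * k.+1 - 6 * k.+1.
have -> : (12 * k.+1 - 1) * (6 * k.+1 - 1) = 3 * y + 1 by rewrite /y; nia.
have -> : (3 * y + 1) %/ 3 = y by lia.
have e : (12 * k.+1 - 1) * (12 * k.+1 - 2) = 6 * y + 2 by rewrite /y; nia.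
by rewrite e in count; clearbody y; lia.
Qed.

Lemma Zp_order6 n : n.+1 %% 6 = 0 ->
  exists g : 'I_n.+1, (g *+ 6 = 0)%R /\ forall k, 0 < k < 6 -> (g *+ k)%R != 0%R.
Proof.
move=> V6; pose g : 'I_n.+1 := inZp (n.+1 %/ 6); exists g.
have Vs : n.+1 = n.+1 %/ 6 * 6 by rewrite divnK //; apply/eqP.
have val_g k : val (g *+ k)%R = (n.+1 %/ 6 * k) %% n.+1.
  by rewrite Zp_mulrn /= modnMml.
split=> [|k /andP[k0 k6]]; first by apply: val_inj; rewrite val_g /= -Vs modnn.
rewrite -val_eqE val_g /= modn_small; last by rewrite [X in _ < X]Vs ltn_mul2l; lia.
by rewrite muln_eq0 negb_or -!lt0n k0 andbT; lia.
Qed.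

Section TriplePacking.
Variables (T L : finType) (D : {set L}) (blk : L -> {set T}).
Hypothesis blk_card : forall b, b \in D -> #|blk b| = 4.
Hypothesis blk_meet : forall b1 b2, b1 \in D -> b2 \in D -> b1 != b2 ->
  #|blk b1 :&: blk b2| <= 2.

Lemma blk_triple b1 b2 x y z : b1 \in D -> b2 \in D ->
  x != y -> x != z -> y != z -> [set x; y; z] \subset blk b1 :&: blk b2 ->
  b1 = b2.
Proof.
move=> D1 D2 xy xz yz sub; apply/eqP/negPn/negP => b12.
have := leq_trans (subset_leq_card sub) (blk_meet D1 D2 b12).
by rewrite setUC cardsU1 cards2 !inE negb_or xy ![z == _]eq_sym xz yz.
Qed.

Definition deg x := #|[set b in D | x \in blk b]|.
Definition codeg x y := #|[set b in D | (x \in blk b) && (y \in blk b)]|.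
Definition covered x y z :=
  [exists b in D, [&& x \in blk b, y \in blk b & z \in blk b]].
Definition nuncov x y := #|[set z | [&& z != x, z != y & ~~ covered x y z]]|.

Lemma coveredC12 x y z : covered x y z = covered y x z.
Proof. by apply: eq_existsb => b; case: (x \in blk b); case: (y \in blk b). Qed.

Lemma coveredC23 x y z : covered x y z = covered x z y.
Proof.
by apply: eq_existsb => b; case: (y \in blk b); case: (z \in blk b); rewrite ?andbF.
Qed.

Lemma nuncov_sym x y : nuncov x y = nuncov y x.
Proof.
by apply: eq_card => z; rewrite !inE coveredC12 andbA [(z != x) && _]andbC -andbA.
Qed.

Lemma nuncov_gt0P x y :
  reflect (exists z, [/\ z != x, z != y & ~~ covered x y z]) (0 < nuncov x y).
Proof.
apply: (iffP card_gt0P) => [[z]|[z [zx zy ncov]]]; last by exists z; rewrite !inE zx zy.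
by rewrite !inE => /and3P[zx zy ncov]; exists z.
Qed.

Lemma blocks_through_point x y w : y != x -> w != x -> w != y ->
  \sum_(b in [set b in D | (x \in blk b) && (y \in blk b)]) (w \in blk b : nat) =
  covered x y w.
Proof.
move=> yx wx wy; case: (boolP (covered x y w)) => [|ncov].
  case/existsP=> b0 /and4P[Db0 xb0 yb0 wb0].
  have b0B : b0 \in [set b in D | (x \in blk b) && (y \in blk b)].
    by rewrite inE Db0 xb0 yb0.
  rewrite (big_setD1 b0 b0B) /= wb0 big1 // => b.
  rewrite !inE => /andP[bb0 /and3P[Db xb yb]]; apply/eqP; rewrite eqb0.
  apply: contra bb0 => wb; apply/eqP.
  apply: (blk_triple Db Db0 (x := x) (y := y) (z := w)).
  1-3: by rewrite eq_sym.
  by apply/subsetP => p; rewrite !inE => /orP[/orP[]|]/eqP->; rewrite ?xb ?yb ?wb.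
rewrite big1 // => b; rewrite inE => /and3P[Db xb yb]; apply/eqP; rewrite eqb0.
by apply: contra ncov => wb; apply/existsP; exists b; rewrite Db xb yb wb.
Qed.

(* Double counting the incidences (b, w) with x, y, w in the block b. *)
Lemma pair_count x y : y != x -> 2 * codeg x y + nuncov x y = #|T| - 2.
Proof.
move=> yx; set W := [set~ x] :\ y.
have cardW : #|W| = #|T| - 2.
  by have := cardsD1 y [set~ x]; rewrite !inE yx cardsC1 -/W; lia.
set Bxy := [set b in D | (x \in blk b) && (y \in blk b)].
have by_block : \sum_(b in Bxy) \sum_(w in W) (w \in blk b : nat) = 2 * codeg x y.
  rewrite mulnC -sum_nat_const; apply: eq_bigr => b; rewrite inE => /and3P[Db xb yb].
  have := blk_card Db; rewrite (cardsD1 x) (cardsD1 y) !inE xb yb yx -card_in_sum.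
  by move=> [<-]; apply: eq_card => w; rewrite !inE andbA.
have by_point : \sum_(w in W) \sum_(b in Bxy) (w \in blk b : nat) =
    #|[set w in W | covered x y w]|.
  rewrite card_in_sum; apply: eq_bigr => w; rewrite !inE => /andP[wy wx].
  exact: blocks_through_point.
have split_W : #|W| = #|[set w in W | covered x y w]| + nuncov x y.
  rewrite -(cardsID [set w | covered x y w] W); congr (_ + _).
    by apply: eq_card => w; rewrite !inE.
  apply: eq_card => w; rewrite !inE.
  by case: (covered _ _ _); case: (w == x); case: (w == y).
by rewrite -cardW split_W -by_point exchange_big by_block.
Qed.

(* Each block through x meets 3 other points. *)
Lemma sum_codeg x : \sum_(y in [set~ x]) codeg x y = 3 * deg x.
Proof.
under eq_bigr => y _ do rewrite /codeg card_in_sum.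
rewrite exchange_big /deg card_in_sum big_distrr; apply: eq_bigr => b Db /=.
case: (boolP (x \in blk b)) => xb /=; last by rewrite big1.
have := blk_card Db; rewrite (cardsD1 x) xb -card_in_sum add1n muln1 => -[<-].
by apply: eq_card => y; rewrite !inE.
Qed.

Lemma point_count x :
  6 * deg x + \sum_(y in [set~ x]) nuncov x y = (#|T| - 1) * (#|T| - 2).
Proof.
have -> : (#|T| - 1) * (#|T| - 2) = \sum_(y in [set~ x]) (#|T| - 2).
  by rewrite sum_nat_const cardsC1 subn1.
under [RHS]eq_bigr => y /[!inE] yx do rewrite -(pair_count yx).
by rewrite big_split /= -big_distrr sum_codeg /= mulnA.
Qed.

Lemma nuncov_even x y : ~~ odd #|T| -> y != x -> ~~ odd (nuncov x y).
Proof. by move=> evT /pair_count; move: evT; lia. Qed.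

(* With #|T| even, each positive nuncov x y contributes at least 2. *)
Lemma nuncov_sum_ge x (F : {set T}) : ~~ odd #|T| -> x \notin F ->
  (forall y, y \in F -> 0 < nuncov x y) ->
  2 * #|F| <= \sum_(y in [set~ x]) nuncov x y.
Proof.
move=> evT xF Fpos.
have xy y : y \in F -> y != x by apply: contraTneq => ->.
have subF : F \subset [set~ x] by apply/subsetP => y /xy; rewrite !inE.
rewrite (big_setID F) /= (setIidPr subF) mulnC -sum_nat_const.
apply: leq_trans (leq_addr _ _); apply: leq_sum => y yF.
by have := nuncov_even evT (xy y yF); have := Fpos y yF; case: (nuncov x y) => [|[]].
Qed.

End TriplePacking.

Section CodeBlocks.
Variables (u n : nat) (C : {set bmat u n.+1}).
Hypothesis HC : is_OOC_4_2 C.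
Local Notation V := n.+1.
Local Notation cell := ('I_u * 'I_V)%type.

(* A label is a codeword with a column shift; the labels of the code are those whose
   codeword lies in C, and the block of a label is the set of cells it occupies. *)
Definition label := (bmat u V * 'I_V)%type.
Definition labels : {set label} := [set b | b.1 \in C].
Definition block (b : label) : {set cell} := [set p | b.1 (p.1, (p.2 - b.2)%R)].
Definition shift (r : 'I_V) (p : cell) : cell := (p.1, (p.2 + r)%R).
Definition shift_lbl (r : 'I_V) (b : label) : label := (b.1, (b.2 + r)%R).

Lemma shiftK r : cancel (shift r) (shift (- r)%R).
Proof. by move=> [i j]; rewrite /shift /= addrK. Qed.

Lemma shift_inj r : injective (shift r).
Proof. exact: can_inj (shiftK r). Qed.

Lemma shift0 p : shift 0%R p = p.
Proof. by case: p => i j; rewrite /shift addr0. Qed.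

Lemma shiftD r s p : shift s (shift r p) = shift (r + s)%R p.
Proof. by rewrite /shift /= addrA. Qed.

Lemma shift_neq r p : r != 0%R -> shift r p != p.
Proof.
case: p => i j r0; rewrite /shift xpair_eqE eqxx /=.
by apply: contra r0 => /eqP/(canRL (addKr j)); rewrite addNr => ->.
Qed.

Lemma shift_lbl_labels r b : (shift_lbl r b \in labels) = (b \in labels).
Proof. by rewrite !inE. Qed.

Lemma shift_lbl_neq r b : r != 0%R -> shift_lbl r b != b.
Proof.
case: b => A q r0; rewrite /shift_lbl xpair_eqE eqxx /=.
by apply: contra r0 => /eqP/(canRL (addKr q)); rewrite addNr => ->.
Qed.

Lemma mem_block_shift (b : label) r p :
  (shift r p \in block (shift_lbl r b)) = (p \in block b).
Proof. by rewrite !inE /= opprD addrACA subrr addr0. Qed.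

Lemma ccorr_block (A B : bmat u V) (r s : 'I_V) :
  ccorr A B (r - s)%R = #|block (A, r) :&: block (B, s)|.
Proof.
pose psi (p : cell) := ((p.1, (p.2 - r)%R), (p.2 - s)%R).
have psi_inj : injective psi.
  by apply: (can_inj (g := fun q => (q.1.1, (q.1.2 + r)%R))) => -[i j]; rewrite /= subrK.
rewrite -(card_imset _ psi_inj); apply: eq_card => -[[i j] k].
rewrite !inE; apply/idP/imsetP => /=.
- move=> /and3P[Aij Bik /eqP jk].
  have {}jk : k = (j + (r - s))%R by apply: val_inj; exact: jk.
  exists (i, (j + r)%R); last by rewrite /psi /= addrK jk addrA.
  by rewrite !inE /= addrK Aij -addrA -jk.
- move=> -[[i' j']]; rewrite !inE /= => /andP[Ap Bp] [-> -> ->].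
  rewrite Ap Bp; apply/eqP.
  by change (val (j' - s)%R = val (j' - r + (r - s))%R); rewrite addrA subrK.
Qed.

Lemma block_card b : b \in labels -> #|block b| = 4.
Proof.
rewrite inE => Cb; rewrite -(HC.1 _ Cb) /hweight.
rewrite -(card_preimset _ (@shift_inj (- b.2)%R)).
by apply: eq_card => p; rewrite !inE.
Qed.

Lemma block_meet b1 b2 : b1 \in labels -> b2 \in labels -> b1 != b2 ->
  #|block b1 :&: block b2| <= 2.
Proof.
case: b1 b2 => [A r] [B s]; rewrite !inE /= => CA CB neq.
rewrite -ccorr_block; apply: (HC.2 _ _ CA CB); move: neq; rewrite xpair_eqE negb_and.
case/orP=> [->//|rs]; apply/orP; right; apply: contra rs => /eqP rs0.
by rewrite -subr_eq0; apply/eqP/val_inj.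
Qed.

Local Notation dg := (deg labels block).
Local Notation cov := (covered labels block).
Local Notation unc := (nuncov labels block).

(* Over the cells of column 0, every codeword is met once per cell it occupies. *)
Lemma sum_deg_column0 : \sum_(i : 'I_u) dg (i, 0%R) = 4 * #|C|.
Proof.
have deg0 i : dg (i, 0%R) = \sum_(A in C) \sum_(r : 'I_V) (A (i, (- r)%R) : nat).
  rewrite /deg card_in_sum pair_big /=.
  by apply: eq_big => [[A r]|[A r] _]; rewrite !inE ?andbT //= sub0r.
under eq_bigr => i _ do rewrite deg0.
rewrite exchange_big mulnC -sum_nat_const; apply: eq_bigr => A CA /=.
under eq_bigr => i _ do rewrite (reindex_inj (@oppr_inj _)) /=.
under eq_bigr => i _ do under eq_bigr => r _ do rewrite opprK.
rewrite pair_bigA -(HC.1 _ CA) /hweight -sum1dep_card [RHS]big_mkcond /=.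
by apply: eq_bigr => -[i j].
Qed.

Lemma covered_shift r x y z :
  cov (shift r x) (shift r y) (shift r z) = cov x y z.
Proof.
have shift_cov s x' y' z' : cov x' y' z' -> cov (shift s x') (shift s y') (shift s z').
  case/existsP=> b /and4P[Lb xb yb zb]; apply/existsP; exists (shift_lbl s b).
  by rewrite shift_lbl_labels Lb !mem_block_shift xb yb zb.
apply/idP/idP => [/(shift_cov (- r)%R)|]; last exact: shift_cov.
by rewrite !shiftK.
Qed.

Lemma nuncov_shift r x y : unc (shift r x) (shift r y) = unc x y.
Proof.
rewrite /nuncov -(card_preimset _ (@shift_inj r)); apply: eq_card => z.
by rewrite !inE !(inj_eq (@shift_inj r)) covered_shift.
Qed.

Section RowOfOrderSix.
Variable g : 'I_V.
Hypothesis g6 : (g *+ 6)%R = 0%R.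
Hypothesis g_ord : forall k, 0 < k < 6 -> (g *+ k)%R != 0%R.
Variable i0 : 'I_u.

Definition pt k : cell := (i0, (g *+ k)%R).
Local Notation x0 := (pt 0).

Lemma shift_pt k l : shift (g *+ k)%R (pt l) = pt (l + k).
Proof. by rewrite /shift /pt /= mulrnDr. Qed.

Lemma pt_add6 k : pt (k + 6) = pt k.
Proof. by rewrite /pt mulrnDr g6 addr0. Qed.

Lemma shift3K p : shift (g *+ 3)%R (shift (g *+ 3)%R p) = p.
Proof. by rewrite shiftD -mulrnDr g6 shift0. Qed.

Lemma pt_lt_neq k l : k < l < 6 -> pt k != pt l.
Proof.
case/andP=> kl l6; rewrite /pt xpair_eqE eqxx /=.
have := g_ord (k := l - k); rewrite subn_gt0 kl (leq_ltn_trans (leq_subr _ _) l6).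
move=> /(_ isT); apply: contra => /eqP ekl; apply/eqP.
apply: (addrI (g *+ k)%R); rewrite -mulrnDr subnKC; last exact: ltnW.
by rewrite -ekl addr0.
Qed.

Lemma pt_neq k l : k < 6 -> l < 6 -> k != l -> pt k != pt l.
Proof.
move=> k6 l6; case: ltngtP => // [kl|lk] _; first by rewrite pt_lt_neq // kl.
by rewrite eq_sym pt_lt_neq // lk.
Qed.

Lemma mem_block_shift_pt k l b :
  (pt (l + k) \in block (shift_lbl (g *+ k)%R b)) = (pt l \in block b).
Proof. by rewrite -shift_pt mem_block_shift. Qed.

(* A block through 0, 2g, 4g would coincide with its own 2g-shift. *)
Lemma uncov_024 : ~~ cov x0 (pt 2) (pt 4).
Proof.
apply/existsP => -[b /and4P[Lb b0 b2 b4]].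
have Lb' : shift_lbl (g *+ 2)%R b \in labels by rewrite shift_lbl_labels.
have := shift_lbl_neq b (g_ord (k := 2) isT); apply/negP/negPn/eqP.
apply: (blk_triple block_meet Lb' Lb (x := pt 2) (y := pt 4) (z := x0)).
1-3: by rewrite pt_neq.
have b0' : x0 \in block (shift_lbl (g *+ 2)%R b).
  by rewrite -(pt_add6 0) -[0 + 6]/(4 + 2) mem_block_shift_pt.
apply/subsetP => p; rewrite in_setU in_setU1 !in_set1 => /orP[/orP[]|] /eqP->;
  rewrite in_setI ?b0 ?b2 ?b4 ?andbT //.
- by rewrite -[2]/(0 + 2) mem_block_shift_pt.
- by rewrite -[4]/(2 + 2) mem_block_shift_pt.
Qed.

(* The 3g-shift is a fixed-point-free involution on the blocks through 0 and 3g. *)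
Lemma codeg_03_even : ~~ odd (codeg labels block x0 (pt 3)).
Proof.
apply: (involution_card_even (f := shift_lbl (g *+ 3)%R)).
- by case=> A q; rewrite /shift_lbl /= -addrA -mulrnDr g6 addr0.
- by move=> b; apply/shift_lbl_neq/g_ord.
move=> b; rewrite [b \in _]in_set [shift_lbl _ _ \in _]in_set shift_lbl_labels.
move=> /and3P[Lb b0 b3]; rewrite Lb.
rewrite -[pt 3]/(pt (0 + 3)) mem_block_shift_pt b0 andbT.
by rewrite -(pt_add6 0) -[0 + 6]/(3 + 3) mem_block_shift_pt.
Qed.

(* 2 codeg + nuncov = N - 2 with codeg even and 4 | N forces nuncov = 2 mod 4. *)
Lemma nuncov_03_pos : (u * V) %% 4 = 0 -> 0 < unc x0 (pt 3).
Proof.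
move=> N4; have u_gt0 : 0 < u by case: (u) i0 => // -[].
have := pair_count block_card block_meet (pt_neq (k := 3) (l := 0) isT isT isT).
by rewrite card_prod !card_ord; have := codeg_03_even; nia.
Qed.

(* Shifting by l g maps the pair {0, k g} to {l g, 0} when k + l = 6. *)
Lemma nuncov_pt_opp k l : k + l = 6 -> unc x0 (pt k) = unc x0 (pt l).
Proof.
move=> kl; rewrite -(nuncov_shift (g *+ l)%R x0 (pt k)) !shift_pt kl add0n.
by rewrite -[6]/(0 + 6) pt_add6 nuncov_sym.
Qed.

Definition partners : {set cell} := [set y | (y != x0) && (0 < unc x0 y)].

Lemma pt_partner k : 0 < k < 6 -> (pt k \in partners) = (0 < unc x0 (pt k)).
Proof. by case/andP=> k0 k6; rewrite inE pt_neq // -lt0n. Qed.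

Lemma third_partner y z : y != x0 -> z != x0 -> y != z -> ~~ cov x0 y z ->
  z \in partners.
Proof.
move=> y0 z0 yz ncov; rewrite inE z0; apply/nuncov_gt0P; exists y.
by rewrite y0 yz -coveredC23.
Qed.

Lemma pt2_pt4_partners : (pt 2 \in partners) && (pt 4 \in partners).
Proof.
have p20 : pt 2 != x0 by rewrite pt_neq.
have p40 : pt 4 != x0 by rewrite pt_neq.
have p24 : pt 2 != pt 4 by rewrite pt_neq.
rewrite (third_partner p20 p40 p24 uncov_024) andbT.
by apply: (third_partner p40 p20); rewrite 1?eq_sym // -coveredC23 uncov_024.
Qed.

Lemma pt1_pt5_partners : (pt 1 \in partners) = (pt 5 \in partners).
Proof.
by rewrite (pt_partner (k := 1)) // (nuncov_pt_opp (k := 1) (l := 5)) // pt_partner.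
Qed.

(* An uncovered triple {x0, 3g, w} and its 3g-shift {3g, x0, w + 3g} give two
   partners w, w + 3g, both different from 3g. *)
Lemma shift3_partners : (u * V) %% 4 = 0 -> exists w,
  [/\ w \in partners, shift (g *+ 3)%R w \in partners,
      w != pt 3 & shift (g *+ 3)%R w != pt 3].
Proof.
move=> N4; have /nuncov_gt0P[w [w0 w3 ncov_w]] := nuncov_03_pos N4.
set w' := shift (g *+ 3)%R w.
have ncov_w' : ~~ cov x0 (pt 3) w'.
  by move: ncov_w; rewrite -(covered_shift (g *+ 3)%R) !shift_pt (pt_add6 0) coveredC12.
have w'0 : w' != x0.
  by rewrite -(pt_add6 0) -[0 + 6]/(3 + 3) -shift_pt (inj_eq (@shift_inj _)).
have w'3 : w' != pt 3 by rewrite -[pt 3]/(pt (0 + 3)) -shift_pt (inj_eq (@shift_inj _)).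
have p30 : pt 3 != x0 by rewrite pt_neq.
exists w; split=> //; apply: (third_partner p30) => //; rewrite eq_sym //.
Qed.

(* Either 1g and 5g are partners, giving 1g, ..., 5g, or neither is, and then the
   pair w, w + 3g of the previous lemma avoids 2g, 4g, giving 2g, 3g, 4g, w, w + 3g. *)
Lemma five_partners : (u * V) %% 4 = 0 -> 5 <= #|partners|.
Proof.
move=> N4; have /andP[P2 P4] := pt2_pt4_partners.
have P3 : pt 3 \in partners by rewrite pt_partner // nuncov_03_pos.
case: (boolP (pt 1 \in partners)) => [P1|nP1].
  have P5 : pt 5 \in partners by rewrite -pt1_pt5_partners.
  apply: (@uniq_card_leq _ _ [:: pt 1; pt 2; pt 3; pt 4; pt 5]).
    by rewrite /= !inE !negb_or !pt_neq.
  by rewrite /= P1 P2 P3 P4 P5.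
have nP5 : pt 5 \notin partners by rewrite -pt1_pt5_partners.
have not_24 y : shift (g *+ 3)%R y \in partners -> (y != pt 2) && (y != pt 4).
  move=> Psy; apply/andP; split; apply: contraTneq Psy => ->; rewrite shift_pt //.
  by rewrite -[4 + 3]/(1 + 6) pt_add6.
have [w [Pw Pw' w3 w'3]] := shift3_partners N4.
have /andP[w2 w4] := not_24 w Pw'.
have /andP[w'2 w'4] := not_24 _ (etrans (congr1 _ (shift3K w)) Pw).
have ww' : w != shift (g *+ 3)%R w by rewrite eq_sym shift_neq // g_ord.
apply: (@uniq_card_leq _ _ [:: pt 2; pt 3; pt 4; w; shift (g *+ 3)%R w]).
  rewrite /= !inE !negb_or !pt_neq // ![pt _ == w]eq_sym ![pt _ == shift _ w]eq_sym.
  by rewrite w2 w4 w3 w'2 w'4 w'3 ww'.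
by rewrite /= P2 P3 P4 Pw Pw'.
Qed.

Lemma sum_nuncov_ge10 : (u * V) %% 4 = 0 -> 10 <= \sum_(y in [set~ x0]) unc x0 y.
Proof.
move=> N4; apply: leq_trans (nuncov_sum_ge block_card block_meet (F := partners) _ _ _).
- by have := five_partners N4; lia.
- by rewrite card_prod !card_ord; move: N4; lia.
- by rewrite inE eqxx.
by move=> y; rewrite inE => /andP[].
Qed.

Lemma deg_x0_bound : (u * V) %% 12 = 0 ->
  dg x0 <= ((u * V - 1) * ((u * V - 2) %/ 2)) %/ 3 - 2.
Proof.
move=> N12; have u_gt0 : 0 < u by case: (u) i0 => // -[].
apply: (deg_bound_arith (S := \sum_(y in [set~ x0]) unc x0 y)) => //; first by nia.
  by rewrite (point_count block_card block_meet) card_prod !card_ord.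
by apply: sum_nuncov_ge10; lia.
Qed.

End RowOfOrderSix.
End CodeBlocks.

Theorem lemma5p3 (u v : nat) (C : {set bmat u v}) :
  0 < u -> 0 < v -> u * v %% 12 = 0 -> v %% 6 = 0 ->
  is_OOC_4_2 C ->
  #|C| <= (u * (((u * v - 1) * ((u * v - 2) %/ 2)) %/ 3 - 2)) %/ 4.
Proof.
case: v C => [//|n] C u_gt0 _ N12 V6 HC.
have [g [g6 g_ord]] := Zp_order6 V6.
rewrite leq_divRL // mulnC -(sum_deg_column0 HC) -[X in _ <= X * _]card_ord.
rewrite -sum_nat_const; apply: leq_sum => i _.
by have := deg_x0_bound HC g6 g_ord i N12; rewrite /pt mulr0n.
Qed.
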